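(* Let $n\ge 2$ and let $G=(V,A,s,t)$ be a doubly-rooted digraph with $|V|=n$, edges enumerated $A=\{a_1,\dots,a_{4n-1}\}$, and $B\subseteq A$ with $|B|\le 3$. Let $A^*=A\cup\{a_0,a_{4n}\}$, where $a_0$ is a new edge with $a_0^+=s$ and $a_{4n}$ is a new edge with $a_{4n}^-=t$ (their other endpoints being a new vertex $r$). For any $a\in A$ that is not a loop, \[S(G,B)=\sum_{c\in A^*:\,c^+=a^-}S(G_{a,c},B_{a,c})-\sum_{d\in A^*:\,d^-=a^+}S(G^{a,d},B^{a,d}),\] where all digraphs are given the enumerations described below.
   Context: For a doubly-rooted digraph $H$ with edges indexed by $\{1,\dots,k\}$ and $B'\subseteq A(H)$: $M(B')$ is the set of indices of edges in $B'$; $P(H)$ is the set of $\sigma\in\mathfrak{S}_k$ such that $(e_{\sigma(1)},\dots,e_{\sigma(k)})$ (with $e_j$ the edge of index $j$) is a directed Eulerian trail from the first root to the second root; for $M=\{j_1<\dots<j_\ell\}$, $\sigma_M\in\mathfrak{S}_\ell$ is $\sigma_M(g)=|\{h:\sigma(j_h)\le\sigma(j_g)\}|$; $S(H,B')=\sum_{\sigma\in P(H)}\mathrm{sgn}(\sigma)\mathrm{sgn}(\sigma_{M(B')})$. Edge $a$ has source $a^-$, target $a^+$; loops and multiple edges allowed. Constructions. For $c\in A$ with $c^+=a^-$: $G_{a,c}$ has vertex set $V$, roots $(s,t)$, and edge set obtained from $A$ by replacing $a$ with a loop $\overline{a}$ at $a^+$ (given the index of $a$) and $c$ with an edge $c_a$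 from $c^-$ to $a^+$ (given the index of $c$). For $d\in A$ with $d^-=a^+$: $G^{a,d}$ has vertex set $V$, roots $(s,t)$, and edge set obtained from $A$ by replacing $a$ with a loop $\overline{a}$ at $a^+$ (index of $a$) and $d$ with an edge $d^a$ from $a^-$ to $d^+$ (index of $d$). If $c=a_0$ (possible only when $s=a^-$), $G_{a,a_0}$ has vertex set $V$, edge set $(A\setminus\{a\})\cup\{\overline{a}\}$ ($\overline{a}$ a loop at $a^+$ with the index of $a$) and roots $(a^+,t)$. If $d=a_{4n}$ (possible only when $t=a^+$), $G^{a,a_{4n}}$ has vertex set $V$, edge set $(A\setminus\{a\})\cup\{\overline{a}\}$ and roots $(s,a^-)$. In all cases $B_{a,c}$ (resp. $B^{a,d}$) is obtained from $B$ by replacing $a$ by $\overline{a}$ and $c$ by $c_a$ (resp. $d$ by $d^a$) whenever these lie in $B$; thus the index sets of the distinguished edges are unchanged. *)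

From mathcomp Require Import all_boot all_order all_algebra all_fingroup.
Set Implicit Arguments. Unset Strict Implicit. Unset Printing Implicit Defensive.
Import GRing.Theory.

(* A doubly-rooted digraph with vertex set V (a finType) and k edges, the
   edges being identified with their indices 'I_k (indices 0..k-1 instead of
   1..k; a uniform shift, irrelevant for signs).  Edge j has source src j and
   target tgt j; loops and multiple edges are allowed. *)

Section Defs.
Variables (V : finType) (k : nat).

Definition sgn_perm (sigma : 'S_k) : int := ((-1) ^+ odd_perm sigma)%R.

Definition inversions (w : seq nat) : nat :=
  \sum_(i < size w) \sum_(j < size w) ((i < j) && (nth 0 w j < nth 0 w i)).
Definition sgn_seq (w : seq nat) : int := ((-1) ^+ inversions w)%R.

Definition index_seq (B : {set 'I_k}) : seq 'I_k := [seq j <- enum 'I_k | j \in B].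

Definition sigma_M (sigma : 'S_k) (B : {set 'I_k}) : seq nat :=
  [seq #|[set h in B | sigma h <= sigma g]| | g <- index_seq B].

Fixpoint walk (src tgt : 'I_k -> V) (v : V) (es : seq 'I_k) (w : V) : bool :=
  match es with
  | [::] => v == w
  | e :: es' => (src e == v) && walk src tgt (tgt e) es' w
  end.

Definition eulerian_trail (src tgt : 'I_k -> V) (s t : V) (sigma : 'S_k) : bool :=
  walk src tgt s [seq sigma i | i <- enum 'I_k] t.

Definition Ptrails (src tgt : 'I_k -> V) (s t : V) : {set 'S_k} :=
  [set sigma : 'S_k | eulerian_trail src tgt s t sigma].

Definition Ssum (src tgt : 'I_k -> V) (s t : V) (B : {set 'I_k}) : int :=
  (\sum_(sigma in Ptrails src tgt s t) sgn_perm sigma * sgn_seq (sigma_M sigma B))%R.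

(* Constructions.  In all of them the vertex set is V and the distinguished
   index set is unchanged (B_{a,c}, B^{a,d} have the same index set as B). *)

(* G_{a,c}, c in A, c^+ = a^- : a -> loop abar at a^+, c -> c_a : c^- -> a^+ *)
Definition src_low (src tgt : 'I_k -> V) (a c : 'I_k) (j : 'I_k) : V :=
  if j == a then tgt a else src j.
Definition tgt_low (src tgt : 'I_k -> V) (a c : 'I_k) (j : 'I_k) : V :=
  if j == a then tgt a else if j == c then tgt a else tgt j.

(* G^{a,d}, d in A, d^- = a^+ : a -> loop abar at a^+, d -> d^a : a^- -> d^+ *)
Definition src_up (src tgt : 'I_k -> V) (a d : 'I_k) (j : 'I_k) : V :=
  if j == a then tgt a else if j == d then src a else src j.
Definition tgt_up (src tgt : 'I_k -> V) (a d : 'I_k) (j : 'I_k) : V :=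
  if j == a then tgt a else tgt j.

(* G_{a,a_0} and G^{a,a_{4n}}: a -> loop abar at a^+, all else unchanged
   (roots change: (a^+, t) resp. (s, a^-)) *)
Definition src_loop (src tgt : 'I_k -> V) (a : 'I_k) (j : 'I_k) : V :=
  if j == a then tgt a else src j.
Definition tgt_loop (src tgt : 'I_k -> V) (a : 'I_k) (j : 'I_k) : V :=
  if j == a then tgt a else tgt j.

End Defs.

(* The weight sgn(sigma) sgn(sigma_M) depends only on
   sigma and on the index set of B, which no construction changes, so it is
   enough to compare, for each sigma, the numbers of graphs in which sigma is an
   Eulerian trail.  Being a trail is a conjunction of junction conditions at the
   positions 0..k: the vertex reached after the first j edges equals the vertex
   left by edge j+1 (with s and t at both ends).  Each modified graph alters two
   junctions: the one at the position p of a, whose departure becomes a^+, and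
   either the junction after c (arrival a^+) or the junction before d
   (departure a^-), with a_0 and a_{4n} sitting at the junctions 0 and k.
   Pairing c and d through their junction j, for j <> p both conditions say
   that junction j reads (a^-, a^+), that p is reached at a^+ and that all
   other junctions match, so they agree; for j = p the c-term is the original
   trail condition and the d-term is void because a is not a loop. *)

From mathcomp Require Import all_boot all_order all_algebra all_fingroup.
From mathcomp Require Import zify.
Import GRing.Theory.
Set Implicit Arguments. Unset Strict Implicit. Unset Printing Implicit Defensive.

Section Junctions.
Variables (V : finType) (k : nat) (e0 : 'I_k).

Definition arrival (tg : 'I_k -> V) (x : V) (w : seq 'I_k) (j : nat) : V :=
  if j is i.+1 then tg (nth e0 w i) else x.

Definition departure (sr : 'I_k -> V) (y : V) (w : seq 'I_k) (j : nat) : V :=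
  if j == size w then y else sr (nth e0 w j).

Lemma walkE sr tg x w y :
  walk sr tg x w y =
  all (fun j => arrival tg x w j == departure sr y w j) (iota 0 (size w).+1).
Proof.
elim: w x => [|e w IH] x; first by rewrite /= /arrival /departure /= andbT.
rewrite [walk _ _ _ _ _]/= IH.
rewrite -[iota 0 (size (e :: w)).+1]/(0 :: iota (1 + 0) (size w).+1).
rewrite iotaDl [all _ (_ :: _)]/= all_map.
congr andb; first by rewrite /arrival /departure /= eq_sym.
by apply: eq_all => j; rewrite /= /arrival /departure /= eqSS; case: j.
Qed.

Lemma eq_walk (sr sr' tg tg' : 'I_k -> V) x w y :
  sr =1 sr' -> tg =1 tg' -> walk sr tg x w y = walk sr' tg' x w y.
Proof. by move=> esr etg; elim: w x => //= e w IH x; rewrite esr etg IH. Qed.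

Lemma eq_eulerian_trail (sr sr' tg tg' : 'I_k -> V) x y sigma :
  sr =1 sr' -> tg =1 tg' ->
  eulerian_trail sr tg x y sigma = eulerian_trail sr' tg' x y sigma.
Proof. exact: eq_walk. Qed.

End Junctions.

Section SwitchJunction.
Variables (T : eqType) (m : nat) (L R : nat -> T) (u v : T) (p : nat).

Definition junctions_match (L' R' : nat -> T) : bool :=
  all (fun j => L' j == R' j) (iota 0 m).

Definition low_match (j : nat) : bool :=
  (L j == u) &&
  junctions_match (fun i => if i == j then v else L i)
                  (fun i => if i == p then v else R i).

Definition up_match (j : nat) : bool :=
  (R j == v) &&
  junctions_match L (fun i => if i == p then v else if i == j then u else R i).

Hypotheses (p_lt_m : p < m) (Rp : R p = u) (u_neq_v : u != v).

Lemma low_match_p : low_match p = junctions_match L R.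
Proof.
have p_in : p \in iota 0 m by rewrite mem_iota.
rewrite /low_match /junctions_match; case Lp: (L p == u) => /=.
- by apply: eq_all => i; case: (i =P p) => [->|]; rewrite ?eqxx ?Rp.
- by apply/esym/negbTE/allPn; exists p; rewrite // Rp Lp.
Qed.

Lemma up_match_p : up_match p = false.
Proof. by rewrite /up_match Rp (negbTE u_neq_v). Qed.

Lemma low_up_match j : j < m -> j != p -> low_match j = up_match j.
Proof.
move=> j_lt_m /negbTE j_neq_p; have j_in : j \in iota 0 m by rewrite mem_iota.
rewrite /low_match /up_match /junctions_match.
case Lj: (L j == u); case Rj: (R j == v) => //=.
- apply: eq_all => i; case: (i =P j) => [->|//].
  by rewrite j_neq_p (eqP Lj) (eqP Rj) !eqxx.
- by apply/negbTE/allPn; exists j; rewrite // eqxx j_neq_p eq_sym Rj.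
- by apply/esym/negbTE/allPn; exists j; rewrite // eqxx j_neq_p Lj.
Qed.

Lemma junctions_match_switch :
  junctions_match L R + \sum_(j < m) up_match j = \sum_(j < m) low_match j.
Proof.
rewrite [in RHS](bigD1 (Ordinal p_lt_m)) // [in LHS](bigD1 (Ordinal p_lt_m)) //=.
rewrite low_match_p up_match_p add0n; congr addn.
by apply: eq_bigr => j j_neq_p; rewrite low_up_match.
Qed.

End SwitchJunction.

Section TrailCount.
Variables (V : finType) (k : nat) (src tgt : 'I_k -> V) (s t : V) (a : 'I_k).
Variable sigma : 'S_k.

Let trail := [seq sigma i | i <- enum 'I_k].
Definition edge_at (i : nat) : 'I_k := nth a trail i.
Let p : nat := (sigma^-1)%g a.
Let arr := arrival a tgt s trail.
Let dep := departure a src t trail.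

Lemma size_trail : size trail = k.
Proof. by rewrite size_map size_enum_ord. Qed.

Lemma edge_atE (i : 'I_k) : edge_at i = sigma i.
Proof. by rewrite /edge_at /trail (nth_map a) ?size_enum_ord // nth_ord_enum. Qed.

Lemma p_lt_k : p < k. Proof. exact: ltn_ord. Qed.

Lemma eq_edge_at i i' : i < k -> i' < k -> (edge_at i == edge_at i') = (i == i').
Proof.
move=> lt_i lt_i'; rewrite (edge_atE (Ordinal lt_i)) (edge_atE (Ordinal lt_i')).
by rewrite (inj_eq perm_inj).
Qed.

Lemma edge_at_p : edge_at p = a.
Proof. by rewrite (edge_atE ((sigma^-1)%g a)) permKV. Qed.

Lemma edge_at_eq_a i : i < k -> (edge_at i == a) = (i == p).
Proof. by move=> lt_i; rewrite -{1}edge_at_p eq_edge_at ?p_lt_k. Qed.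

Lemma tgt_loopE : tgt_loop src tgt a =1 tgt.
Proof. by move=> j; rewrite /tgt_loop; case: eqP => [->|]. Qed.

Lemma tgt_upE d : tgt_up src tgt a d =1 tgt.
Proof. by move=> j; rewrite /tgt_up; case: eqP => [->|]. Qed.

Lemma arrival_root x j :
  arrival a tgt x trail j = if j == 0 then x else arr j.
Proof. by case: j. Qed.

(* At the junction p.+1 right after a the arrival is already tgt a. *)
Lemma arrival_tgt_low i j : i < k -> j <= k ->
  arrival a (tgt_low src tgt a (edge_at i)) s trail j =
  if j == i.+1 then tgt a else arr j.
Proof.
move=> lt_i; case: j => [|j] //= lt_j; rewrite /arr /arrival /tgt_low -/(edge_at j).
rewrite eq_edge_at ?edge_at_eq_a // eqSS; case: (j =P p) => [->|]; last by case: ifP.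
by rewrite edge_at_p; case: ifP.
Qed.

Lemma departure_src_loop y j : j <= k ->
  departure a (src_loop src tgt a) y trail j =
  if j == p then tgt a else departure a src y trail j.
Proof.
move=> le_j; rewrite /departure size_trail /src_loop.
case: (j =P k) => [->|ne_j]; first by rewrite (gtn_eqF p_lt_k).
by rewrite -/(edge_at j) edge_at_eq_a //; lia.
Qed.

Lemma departure_src_up i y j : i < k -> j <= k ->
  departure a (src_up src tgt a (edge_at i)) y trail j =
  if j == p then tgt a else if j == i then src a else departure a src y trail j.
Proof.
move=> lt_i le_j; rewrite /departure size_trail /src_up.
case: (j =P k) => [->|ne_j]; first by rewrite (gtn_eqF p_lt_k) (gtn_eqF lt_i).
by rewrite -/(edge_at j) edge_at_eq_a ?eq_edge_at //; lia.
Qed.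

Lemma eulerian_trail_junctions (sr tg : 'I_k -> V) x y :
  eulerian_trail sr tg x y sigma =
  junctions_match k.+1 (arrival a tg x trail) (departure a sr y trail).
Proof. by rewrite /eulerian_trail (walkE a) size_trail. Qed.

Definition low_trail (j : nat) : bool :=
  if j is i.+1 then
    (tgt (edge_at i) == src a) &&
    eulerian_trail (src_low src tgt a (edge_at i)) (tgt_low src tgt a (edge_at i))
                   s t sigma
  else
    (s == src a) &&
    eulerian_trail (src_loop src tgt a) (tgt_loop src tgt a) (tgt a) t sigma.

Definition up_trail (j : nat) : bool :=
  if j == k then
    (t == tgt a) &&
    eulerian_trail (src_loop src tgt a) (tgt_loop src tgt a) s (src a) sigma
  else
    (src (edge_at j) == tgt a) &&
    eulerian_trail (src_up src tgt a (edge_at j)) (tgt_up src tgt a (edge_at j))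
                   s t sigma.

Lemma low_trailE j : j <= k ->
  low_trail j = low_match k.+1 arr dep (src a) (tgt a) p j.
Proof.
rewrite /low_match /junctions_match -/dep; case: j => [|i] le_j /=.
- rewrite (eq_eulerian_trail _ _ _ (frefl _) tgt_loopE) eulerian_trail_junctions.
  congr andb.
  apply: eq_in_all => j; rewrite mem_iota => /andP[_ lt_j].
  by rewrite arrival_root departure_src_loop.
- rewrite eulerian_trail_junctions; congr andb.
  apply: eq_in_all => j; rewrite mem_iota => /andP[_ lt_j].
  by rewrite arrival_tgt_low // departure_src_loop.
Qed.

Lemma up_trailE j : j <= k ->
  up_trail j = up_match k.+1 arr dep (src a) (tgt a) p j.
Proof.
move=> le_j; rewrite /up_trail /up_match /junctions_match.
rewrite (eq_eulerian_trail _ _ _ (frefl _) (tgt_upE _)).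
rewrite (eq_eulerian_trail _ _ _ (frefl _) tgt_loopE) !eulerian_trail_junctions.
case: (j =P k) => [->|/eqP ne_j].
- have -> : dep k = t by rewrite /dep /departure size_trail eqxx.
  congr andb; apply: eq_in_all => i; rewrite mem_iota => /andP[_ lt_i].
  rewrite departure_src_loop; last by lia.
  by rewrite /dep /departure size_trail; case: (i =P k).
- have -> : dep j = src (edge_at j) by rewrite /dep /departure size_trail (negbTE ne_j).
  congr andb; apply: eq_in_all => i; rewrite mem_iota => /andP[_ lt_i].
  by rewrite departure_src_up //; lia.
Qed.

Lemma sum_low_trail :
  \sum_(j < k.+1) low_trail j =
  \sum_(c | tgt c == src a)
     eulerian_trail (src_low src tgt a c) (tgt_low src tgt a c) s t sigma
  + ((s == src a) &&
     eulerian_trail (src_loop src tgt a) (tgt_loop src tgt a) (tgt a) t sigma : nat).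
Proof.
rewrite big_ord_recl addnC /=; congr addn.
rewrite [RHS](reindex_inj (@perm_inj _ sigma)) [RHS]big_mkcond /=.
by apply: eq_bigr => i _; rewrite edge_atE; case: ifP.
Qed.

Lemma sum_up_trail :
  \sum_(j < k.+1) up_trail j =
  \sum_(d | src d == tgt a)
     eulerian_trail (src_up src tgt a d) (tgt_up src tgt a d) s t sigma
  + ((t == tgt a) &&
     eulerian_trail (src_loop src tgt a) (tgt_loop src tgt a) s (src a) sigma : nat).
Proof.
rewrite big_ord_recr /= /up_trail eqxx; congr addn.
rewrite [RHS](reindex_inj (@perm_inj _ sigma)) [RHS]big_mkcond /=.
by apply: eq_bigr => i _; rewrite ltn_eqF // edge_atE; case: ifP.
Qed.

Hypothesis a_not_loop : src a != tgt a.

Lemma trail_count :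
  (eulerian_trail src tgt s t sigma : nat) + \sum_(j < k.+1) up_trail j =
  \sum_(j < k.+1) low_trail j.
Proof.
have p_lt : p < k.+1 := leqW p_lt_k.
have dep_p : dep p = src a.
  by rewrite /dep /departure size_trail ltn_eqF ?p_lt_k // -/(edge_at p) edge_at_p.
rewrite eulerian_trail_junctions.
rewrite (eq_bigr _ (fun (j : 'I_k.+1) _ => congr1 nat_of_bool (low_trailE (ltn_ord j)))).
rewrite (eq_bigr _ (fun (j : 'I_k.+1) _ => congr1 nat_of_bool (up_trailE (ltn_ord j)))).
exact: junctions_match_switch.
Qed.

End TrailCount.

Section TrailSums.
Variables (V : finType) (k : nat) (B : {set 'I_k}).

Definition trail_weight (sigma : 'S_k) : int :=
  (sgn_perm sigma * sgn_seq (sigma_M sigma B))%R.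

Lemma SsumE (sr tg : 'I_k -> V) x y :
  Ssum sr tg x y B =
  (\sum_sigma (eulerian_trail sr tg x y sigma)%:R * trail_weight sigma)%R.
Proof.
rewrite /Ssum big_mkcond; apply: eq_bigr => sigma _; rewrite inE.
by case: eulerian_trail; rewrite ?mul1r ?mul0r.
Qed.

Lemma Ssum_if (b : bool) (sr tg : 'I_k -> V) x y :
  (if b then Ssum sr tg x y B else 0)%R =
  (\sum_sigma (b && eulerian_trail sr tg x y sigma)%:R * trail_weight sigma)%R.
Proof.
case: b; first exact: SsumE.
by rewrite big1 // => sigma _; rewrite mul0r.
Qed.

Lemma sum_Ssum (P : pred 'I_k) (sr tg : 'I_k -> 'I_k -> V) x y :
  (\sum_(c | P c) Ssum (sr c) (tg c) x y B =
   \sum_sigma (\sum_(c | P c) eulerian_trail (sr c) (tg c) x y sigma)%:R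
             * trail_weight sigma)%R.
Proof.
under eq_bigr do rewrite SsumE.
by rewrite exchange_big; apply: eq_bigr => sigma _; rewrite natr_sum mulr_suml.
Qed.

End TrailSums.

Theorem Ssum_nonloop_recurrence (V : finType) (k : nat) (src tgt : 'I_k -> V)
    (s t : V) (B : {set 'I_k}) (a : 'I_k) :
  src a != tgt a ->
  Ssum src tgt s t B =
    ((\sum_(c | tgt c == src a) Ssum (src_low src tgt a c) (tgt_low src tgt a c) s t B
      + (if s == src a then Ssum (src_loop src tgt a) (tgt_loop src tgt a) (tgt a) t B
         else 0))
   - (\sum_(d | src d == tgt a) Ssum (src_up src tgt a d) (tgt_up src tgt a d) s t B
      + (if t == tgt a then Ssum (src_loop src tgt a) (tgt_loop src tgt a) s (src a) B
         else 0)))%R.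
Proof.
move=> a_not_loop; apply/eqP; rewrite eq_sym subr_eq; apply/eqP.
rewrite !sum_Ssum !Ssum_if SsumE -!big_split /=; apply: eq_bigr => sigma _.
by rewrite -!mulrDl -!natrD -sum_low_trail -sum_up_trail trail_count.
Qed.

Theorem lemma4p5 (n : nat) (V : finType)
    (src tgt : 'I_(4 * n - 1) -> V) (s t : V)
    (B : {set 'I_(4 * n - 1)}) (a : 'I_(4 * n - 1)) :
  (2 <= n)%N -> #|V| = n -> (#|B| <= 3)%N -> src a != tgt a ->
  Ssum src tgt s t B =
    ((\sum_(c | tgt c == src a) Ssum (src_low src tgt a c) (tgt_low src tgt a c) s t B
      + (if s == src a then Ssum (src_loop src tgt a) (tgt_loop src tgt a) (tgt a) t B
         else 0))
   - (\sum_(d | src d == tgt a) Ssum (src_up src tgt a d) (tgt_up src tgt a d) s t B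
      + (if t == tgt a then Ssum (src_loop src tgt a) (tgt_loop src tgt a) s (src a) B
         else 0)))%R.
Proof. by move=> _ _ _; exact: Ssum_nonloop_recurrence. Qed.
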